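(* Let $q=p^n$ be a prime power and $d$ a positive divisor of $q-1$. Then $G(q,d)$ has a GI-automorphism (equivalently, has a GI-extension) if and only if there exists an integer $l\ge 0$ with $p^l\equiv -1 \pmod d$.
   Context: $G(q,d)$ is the group of affine maps $\{x\mapsto ax+b:\ a,b\in\mathbb{F}_q,\ a^d=1\}$ under composition; equivalently $G(q,d)\cong C_p^n\rtimes C_d$, where $C_p^n$ is the additive group of $\mathbb{F}_q$ and $C_d\le\mathbb{F}_q^\times$ acts by multiplication. A GI-automorphism of a group $G$ is an automorphism $\sigma$ such that $G$ is generated by $\{g\in G:\sigma(g)=g^{-1}\}$. Given a group $G'$ with a normal subgroup $G$ of index $2$, $G'$ is a GI-extension of $G$ if $G'$ is generated by involutions not contained in $G$. *)

From HB Require Import structures.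
From mathcomp Require Import all_boot all_order all_algebra all_fingroup all_solvable all_field.
Set Implicit Arguments. Unset Strict Implicit. Unset Printing Implicit Defensive.
Import GRing.Theory.

(* G(q,d) realised concretely inside the permutation group of the finite
   field F (|F| = q): the set of affine permutations x |-> a x + b with
   a, b in F and a^d = 1.  (It is a subgroup of {perm F}; composition order
   of perms is irrelevant for the set.) *)
Definition Gqd (F : finFieldType) (d : nat) : {set {perm F}} :=
  [set s : {perm F} | [exists a : F, exists b : F,
      (a ^+ d == 1)%R && [forall x : F, s x == (a * x + b)%R]]].

Definition GI_automorphism (gT : finGroupType) (G : {set gT}) (sigma : {perm gT}) : Prop :=
  sigma \in Aut G /\ <<[set g in G | sigma g == g^-1]>>%g = G.

Definition has_GI_automorphism (gT : finGroupType) (G : {set gT}) : Prop :=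
  exists sigma : {perm gT}, GI_automorphism G sigma.

From HB Require Import structures.
From mathcomp Require Import all_boot all_order all_algebra all_fingroup all_solvable all_field.

(* A GI-automorphism sigma inverts a generating set of G = G(q,d), so the
   slope of x |-> a x + b satisfies slope (sigma g) = (slope g)^-1 on all of G.
   Translations have order p, coprime to d, so sigma maps them to translations;
   this gives an additive bijection tau of F_q with tau (z x) = z^-1 tau x for a
   primitive d-th root of unity z.  Applying tau to the minimal polynomial of z
   over F_p shows that z^-1 is a Frobenius conjugate z ^+ p^l, i.e. d | p^l + 1.

   Conversely, if d | p^l + 1, let K = F_p(mu_d) and let psi be minus the map
   raising the coordinates in a K-basis of F_q to the power p^l.  Then
   psi (c x) = c^-1 psi x for c in mu_d, so conjugation by psi normalises G and
   inverts the dilations x |-> a x and the translations by the basis vectors;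
   these generate G because mu_d spans K over F_p. *)

Set Implicit Arguments. Unset Strict Implicit. Unset Printing Implicit Defensive.
Import GRing.Theory.

Section AffinePermutations.
Variable F : finFieldType.
Implicit Types (s : {perm F}) (a b c x : F).
Local Open Scope ring_scope.

Definition slope s := s 1 - s 0.
Definition offset s := s 0.

Lemma slope_neq0 s : slope s != 0.
Proof. by rewrite subr_eq0 (inj_eq perm_inj) oner_eq0. Qed.

Lemma aff_inj a b : a != 0 -> injective (fun x => a * x + b).
Proof. by move=> a0 x y /addIr /(mulfI a0). Qed.

(* For a = 0 there is no such permutation; [aff 0 b] is the identity. *)
Definition aff a b : {perm F} :=
  if (a != 0) =P true is ReflectT a0 then perm (@aff_inj a b a0) else 1%g.

Lemma affE a b x : a != 0 -> aff a b x = a * x + b.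
Proof. by rewrite /aff; case: eqP => // a0 _; rewrite permE. Qed.

Lemma slope_aff a b : a != 0 -> slope (aff a b) = a.
Proof. by move=> a0; rewrite /slope !affE // mulr1 mulr0 add0r addrK. Qed.

Lemma offset_aff a b : a != 0 -> offset (aff a b) = b.
Proof. by move=> a0; rewrite /offset affE // mulr0 add0r. Qed.

Lemma aff0 b : aff 0 b = 1%g.
Proof. by rewrite /aff; case: eqP => // zero_neq0; exfalso; move: zero_neq0; rewrite eqxx. Qed.

Lemma aff10 : aff 1 0 = 1%g.
Proof. by apply/permP => x; rewrite affE ?oner_neq0 // perm1 mul1r addr0. Qed.

Lemma affM a b a' b' : a != 0 -> a' != 0 ->
  (aff a b * aff a' b')%g = aff (a * a') (a' * b + b').
Proof.
move=> a0 a'0; apply/permP => x.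
by rewrite permM !affE ?mulf_neq0 // mulrDr addrA mulrA [a' * a]mulrC.
Qed.

Lemma affV a b : a != 0 -> (aff a b)^-1%g = aff a^-1 (- (a^-1 * b)).
Proof.
move=> a0; apply: (mulgI (aff a b)); rewrite mulgV affM ?invr_eq0 //.
by rewrite divff // mulrC addrN aff10.
Qed.

Lemma affX a b k : a != 0 -> exists c, (aff a b ^+ k)%g = aff (a ^+ k) c.
Proof.
move=> a0; elim: k => [|k [c IHk]]; first by exists 0; rewrite expg0 expr0 aff10.
by exists (a * c + b); rewrite expgSr IHk affM ?expf_neq0 // exprSr.
Qed.

Definition transl b := aff 1 b.

Lemma translD b c : transl (b + c) = (transl b * transl c)%g.
Proof. by rewrite /transl affM ?oner_neq0 // !mul1r. Qed.

Lemma translMn b k : (transl b ^+ k)%g = transl (b *+ k).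
Proof.
elim: k => [|k IHk]; first by rewrite expg0 mulr0n /transl aff10.
by rewrite expgSr IHk mulrSr translD.
Qed.

Lemma transl_inj : injective transl.
Proof. by move=> b c /(congr1 offset); rewrite !offset_aff ?oner_neq0. Qed.

Lemma conj_transl a b c : a != 0 ->
  ((aff a c)^-1 * transl b * aff a c)%g = transl (a * b).
Proof.
move=> a0; rewrite affV // /transl !affM ?mulf_neq0 ?invr_eq0 ?oner_neq0 //.
by rewrite mulr1 mulVf // mul1r mulrDr addrAC mulrN mulrA divff // mul1r addNr add0r.
Qed.

End AffinePermutations.

Section AffineGroup.
Variables (F : finFieldType) (d : nat).
Implicit Types (s t : {perm F}) (a b : F).
Local Open Scope ring_scope.

Lemma Gqd_coefs s : s \in Gqd F d ->
  slope s ^+ d = 1 /\ s = aff (slope s) (offset s).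
Proof.
rewrite inE => /existsP[a /existsP[b /andP[/eqP ad /forallP sE]]].
have {}sE x : s x = a * x + b by apply/eqP.
have sa : slope s = a by rewrite /slope !sE mulr1 mulr0 add0r addrK.
split; first by rewrite sa.
by apply/permP => x; rewrite affE ?slope_neq0 // /offset sa !sE mulr0 add0r.
Qed.

Lemma aff_Gqd a b : a ^+ d = 1 -> aff a b \in Gqd F d.
Proof.
have Gaff a' b' : a' != 0 -> a' ^+ d = 1 -> aff a' b' \in Gqd F d.
  move=> a'0 a'd; rewrite inE; apply/existsP; exists a'; apply/existsP; exists b'.
  by rewrite a'd eqxx; apply/forallP => x; rewrite affE.
move=> ad; have [-> | a0] := eqVneq a 0; last exact: Gaff.
by rewrite aff0 -aff10 Gaff ?oner_neq0 ?expr1n.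
Qed.

Lemma Gqd_group_set : group_set (Gqd F d).
Proof.
apply/group_setP; split; first by rewrite -aff10 aff_Gqd ?expr1n.
move=> s t /Gqd_coefs[sd ->] /Gqd_coefs[td ->].
by rewrite affM ?slope_neq0 // aff_Gqd // exprMn sd td mulr1.
Qed.

Canonical Gqd_group := group Gqd_group_set.

Lemma transl_Gqd b : transl b \in Gqd F d.
Proof. by rewrite aff_Gqd ?expr1n. Qed.

Lemma slope1 : slope (1%g : {perm F}) = 1.
Proof. by rewrite -aff10 slope_aff ?oner_neq0. Qed.

Lemma slopeM : {in Gqd F d &, {morph @slope F : s t / (s * t)%g >-> s * t}}.
Proof.
move=> s t /Gqd_coefs[_ ->] /Gqd_coefs[_ ->].
by rewrite affM ?slope_neq0 // !slope_aff ?mulf_neq0 ?slope_neq0.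
Qed.

Lemma slopeV : {in Gqd F d, {morph @slope F : s / (s^-1)%g >-> s^-1}}.
Proof.
move=> s /Gqd_coefs[_ ->].
by rewrite affV ?slope_neq0 // !slope_aff ?invr_eq0 ?slope_neq0.
Qed.

End AffineGroup.

Section UnityRoots.
Local Open Scope ring_scope.

Lemma unity_root_neq0 (R : idomainType) (a : R) d : (0 < d)%N -> a ^+ d = 1 -> a != 0.
Proof.
by move=> d_gt0; apply: contra_eq_neq => ->; rewrite expr0n gtn_eqF // eq_sym oner_neq0.
Qed.

Lemma unity_root_coprime (R : idomainType) (a : R) p d : (0 < d)%N -> coprime p d ->
  a ^+ p = 1 -> a ^+ d = 1 -> a = 1.
Proof.
move=> d_gt0 cop_pd ap ad; have [k ka kd] := prim_order_exists d_gt0 ad.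
have kp : (k %| p)%N by rewrite (prim_order_dvd ka) ap.
have k1 : k = 1%N by apply/eqP; rewrite -dvdn1 -(eqP cop_pd) dvdn_gcd kp kd.
by move: ka; rewrite k1 => /prim_expr_order; rewrite expr1.
Qed.

Lemma finField_prim_root_exists (F : finFieldType) d : (0 < d)%N ->
  (d %| #|F|.-1)%N -> exists z : F, d.-primitive_root z.
Proof.
move=> d_gt0 dvd_d; pose nonzero := [seq x <- enum F | x != 0].
have size_nonzero : size nonzero = #|F|.-1.
  rewrite /nonzero -(cardC1 (0 : F)) cardE /enum_mem -filter_predI; apply: congr1.
  by apply: eq_filter => x /=; rewrite !inE andbT.
have : has (#|F|.-1).-primitive_root nonzero.
  apply: has_prim_root; last by rewrite size_nonzero.
  - by rewrite -subn1 subn_gt0 finNzRing_gt1.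
  - apply/allP => x; rewrite mem_filter => /andP[x0 _]; apply/unity_rootP.
    by apply: (mulIf x0); rewrite mul1r -exprSr (ltn_predK (finNzRing_gt1 F)) expf_card.
  - by rewrite filter_uniq // enum_uniq.
by move=> /hasP[g _ g_prim]; exists (g ^+ (#|F|.-1 %/ d)); apply: dvdn_prim_root.
Qed.

End UnityRoots.

Section InverseFrobeniusConjugate.
Local Open Scope ring_scope.
Variables (F : finFieldType) (p : nat).
Hypothesis pcharFp : p \in [pchar F].
Let L := pPrimeCharType pcharFp.

Variables (z : F) (tau : F -> F).
Hypotheses (tauD : {morph tau : x y / x + y}) (tau_inj : injective tau).
Hypothesis tau_mulz : forall x, tau (z * x) = z^-1 * tau x.

Let tau0 : tau 0 = 0.
Proof. by apply: (@addrI _ (tau 0)); rewrite -tauD !addr0. Qed.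

Let tauMn x k : tau (x *+ k) = tau x *+ k.
Proof. by elim: k => [|k IHk]; rewrite ?mulr0n ?tau0 // !mulrS tauD IHk. Qed.

Let tau_mulzX x i : tau (z ^+ i * x) = z ^- i * tau x.
Proof.
elim: i => [|i IHi]; first by rewrite !expr0 invr1 !mul1r.
by rewrite exprS -mulrA tau_mulz IHi mulrA -invfM -exprS.
Qed.

Let tau_mul_horner (P : {poly L}) x : P \is a polyOver 1%VS ->
  tau ((P.[z : L] : L) * x) = (P.[(z^-1 : F) : L] : L) * tau x.
Proof.
move=> /polyOverP P_Fp; rewrite !horner_coef !mulr_suml.
rewrite (big_morph tau tauD tau0); apply: eq_bigr => i _.
have /vlineP[a ->] := P_Fp i; rewrite -!mulrA.
(* In L, the F_p-scaling [a *: u] is [a%:R * u] computed in F. *)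
change ((a *: (1 : L)) * ((z : L) ^+ i * x)) with ((a%:R * 1 : F) * (z ^+ i * x)).
change ((a *: (1 : L)) * ((z^-1 : L) ^+ i * tau x)) with ((a%:R * 1 : F) * (z^-1 ^+ i * tau x)).
by rewrite !mul1r !mulr_natl tauMn tau_mulzX exprVn.
Qed.

(* [tau] carries the minimal polynomial of [z] over F_p to one vanishing at
   [z^-1], so [z^-1] is a Galois conjugate of [z], i.e. a Frobenius iterate. *)
Lemma inv_Frobenius_conjugate : exists j, z^-1 = z ^+ (p ^ j).
Proof.
have root_inv : root (minPoly 1 (z : L)) ((z^-1 : F) : L).
  have := tau_mul_horner 1 (minPolyOver 1 (z : L)).
  rewrite (rootP (root_minPoly 1 (z : L))) mul0r tau0 => /esym/eqP.
  rewrite mulf_eq0 => /orP[// | /eqP tau1].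
  by have /eqP := tau_inj (etrans tau1 (esym tau0)); rewrite oner_eq0.
have [_ _ /(normalField_root_minPoly (subvf _))] :=
  and3P (finField_galois (subvf (1%VS : {vspace L}))).
case/(_ (z : L) _ (memvf _) root_inv) => x Gal_x xz.
have [alpha /eqP Gal_gen alphaE] := finField_galois_generator (subvf (1%AS : {subfield L})).
move: Gal_x; rewrite Gal_gen => /cycleP[j xj]; rewrite {}xj in xz.
exists j; rewrite -xz {xz}; elim: j => [|j IHj]; first by rewrite expg0 gal_id expn0 expr1.
rewrite expgSr galM ?memvf // IHj alphaE ?memvf // card_Fp ?(pcharf_prime pcharFp) //.
by rewrite dimv1 expn1 expnSr exprM.
Qed.

End InverseFrobeniusConjugate.

Section GIForward.
Variables (F : finFieldType) (p d : nat).
Local Open Scope ring_scope.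
Hypotheses (pcharFp : p \in [pchar F]) (d_gt0 : (0 < d)%N) (coprime_pd : coprime p d).

Section Automorphism.
Variable sg : {perm {perm F}}.
Hypothesis Aut_sg : sg \in Aut (Gqd F d).

Let sgM : {in Gqd F d &, {morph sg : s t / (s * t)%g}} := morphM (autm Aut_sg).
Let sg1 : sg 1%g = 1%g := morph1 (autm Aut_sg).
Let sgV : {in Gqd F d, {morph sg : s / (s^-1)%g}} := morphV (autm Aut_sg).
Let sgX k : {in Gqd F d, {morph sg : s / (s ^+ k)%g}} := morphX (autm Aut_sg) k.
Let sgG : {in Gqd F d, forall s, sg s \in Gqd F d} := Aut_closed Aut_sg.

Definition aut_transl b := offset (sg (transl b)).

(* (sg t) ^+ p = sg (t ^+ p) = 1, so the slope of sg t is both a p-th and a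
   d-th root of unity, hence 1. *)
Lemma aut_translE b : sg (transl b) = transl (aut_transl b).
Proof.
have Gb := transl_Gqd d b; have /Gqd_coefs[sd sE] := sgG Gb.
have [c sXp] := affX (offset (sg (transl b))) p (slope_neq0 (sg (transl b))).
have sp : slope (sg (transl b)) ^+ p = 1.
  rewrite -(slope_aff c (expf_neq0 p (slope_neq0 _))) -sXp -sE -sgX //.
  by rewrite translMn -mulr_natr (pcharf0 pcharFp) mulr0 /transl aff10 sg1 slope1.
by rewrite {1}sE (unity_root_coprime d_gt0 coprime_pd sp sd).
Qed.

Lemma aut_translD : {morph aut_transl : b c / b + c}.
Proof.
move=> b c; apply: transl_inj.
by rewrite -aut_translE translD sgM ?transl_Gqd // !aut_translE -translD.
Qed.

Lemma aut_transl_inj : injective aut_transl.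
Proof. by move=> b c e; apply/transl_inj/(perm_inj (s := sg)); rewrite !aut_translE e. Qed.

Lemma aut_transl_mul a b : a ^+ d = 1 ->
  aut_transl (a * b) = slope (sg (aff a 0)) * aut_transl b.
Proof.
move=> ad; have a0 := unity_root_neq0 d_gt0 ad; have Ga := aff_Gqd 0 ad.
have /Gqd_coefs[_ sE] := sgG Ga.
apply: transl_inj; rewrite -aut_translE -(conj_transl b 0 a0).
rewrite !sgM ?groupM ?groupV ?transl_Gqd // sgV // aut_translE sE.
by rewrite conj_transl ?slope_aff ?slope_neq0.
Qed.

Lemma GI_slope : <<[set g in Gqd F d | sg g == (g^-1)%g]>>%g = Gqd F d ->
  {in Gqd F d, forall g, slope (sg g) * slope g = 1}.
Proof.
move=> genG; pose S := [set g in Gqd F d | slope (sg g) * slope g == 1].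
have S_group : group_set S.
  apply/group_setP; split; first by rewrite inE group1 sg1 slope1 mulr1 /=.
  move=> s t /setIdP[Gs /eqP Ss] /setIdP[Gt /eqP St]; rewrite inE groupM //=.
  by rewrite sgM // !(@slopeM _ d) ?sgG // mulrACA Ss St mulr1.
have sub_GS : Gqd F d \subset S.
  rewrite -{1}genG (gen_subG _ (group S_group)); apply/subsetP => g.
  case/setIdP => Gg /eqP sgg; apply/setIdP; split => //.
  by rewrite sgg (slopeV Gg) mulVf ?slope_neq0.
by move=> g /(subsetP sub_GS) /setIdP[_ /eqP].
Qed.

End Automorphism.

Lemma GI_Gqd_dvd_expS1 : (d %| #|F|.-1)%N ->
  has_GI_automorphism (Gqd F d) -> exists l, (d %| p ^ l + 1)%N.
Proof.
move=> dvd_d [sg [Aut_sg genG]].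
have [z z_prim] := finField_prim_root_exists d_gt0 dvd_d.
have zd : z ^+ d = 1 := prim_expr_order z_prim.
have z0 := unity_root_neq0 d_gt0 zd.
have slope_z : slope (sg (aff z 0)) = z^-1.
  have := GI_slope Aut_sg genG (aff_Gqd 0 zd).
  by rewrite slope_aff // => /(canRL (mulfK z0)); rewrite mul1r.
have [j zj] : exists j, z^-1 = z ^+ (p ^ j).
  apply: (inv_Frobenius_conjugate pcharFp (aut_translD Aut_sg) (aut_transl_inj Aut_sg)).
  by move=> x; rewrite (aut_transl_mul Aut_sg) // slope_z.
by exists j; rewrite (prim_order_dvd z_prim) exprD expr1 -zj mulVf.
Qed.

End GIForward.

Section GIBackward.
Variables (F : finFieldType) (p d l : nat).
Local Open Scope ring_scope.
Hypotheses (pcharFp : p \in [pchar F]) (d_gt0 : (0 < d)%N) (dvd_d_expS1 : (d %| p ^ l + 1)%N).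
Let L := pPrimeCharType pcharFp.
Let m := (p ^ l)%N.

Let m_gt0 : (0 < m)%N.
Proof. by rewrite expn_gt0 prime_gt0 ?(pcharf_prime pcharFp). Qed.

Lemma unity_root_expm (a : F) : a ^+ d = 1 -> a ^+ m = a^-1.
Proof.
move=> ad; have a0 := unity_root_neq0 d_gt0 ad.
apply: (mulIf a0); rewrite mulVf // -exprSr -addn1.
by have /dvdnP[k ->] := dvd_d_expS1; rewrite mulnC exprM ad expr1n.
Qed.

Definition unity_roots : seq L := [seq x <- enum F | x ^+ d == 1].

Lemma mem_unity_roots (x : F) : ((x : L) \in unity_roots) = (x ^+ d == 1).
Proof. by rewrite mem_filter mem_enum andbT. Qed.

Lemma unity_roots_span_aspace : is_aspace <<unity_roots>>.
Proof.
rewrite /is_aspace has_algid1; last by apply: memv_span; rewrite mem_unity_roots expr1n.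
have mul_span (u : L) : {in unity_roots, forall y, y * u \in <<unity_roots>>%VS} ->
    {in <<unity_roots>>%VS, forall v, v * u \in <<unity_roots>>%VS}.
  move=> Ru v Uv; have: (amulr u @: <<unity_roots>> <= <<unity_roots>>)%VS.
    by rewrite limg_span; apply/span_subvP => _ /mapP[y Ry ->]; rewrite lfunE Ru.
  by move/subvP; apply; have := memv_img (amulr u) Uv; rewrite lfunE.
have mulr_root (x : L) : x \in unity_roots ->
    {in <<unity_roots>>%VS, forall v, v * x \in <<unity_roots>>%VS}.
  move=> Rx; apply: mul_span => y Ry; apply: memv_span.
  by move: Ry Rx; rewrite !mem_unity_roots => /eqP yd /eqP xd; rewrite exprMn yd xd mulr1.
apply/prodvP => u v Uu Uv; apply: mul_span Uu => y Ry.
by rewrite mulrC mulr_root.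
Qed.

Definition unity_roots_field : {subfield L} := ASpace unity_roots_span_aspace.
Let K := unity_roots_field.
Let LF := fieldOver K.
Let B := vbasis {:LF}.
Let r := \dim {:LF}.

Lemma unity_root_field_mem (a : F) : a ^+ d = 1 -> (a : L) \in K.
Proof. by move=> ad; apply: memv_span; rewrite mem_unity_roots ad. Qed.

Definition semifrob (x : LF) : LF := \sum_(i < r) coord B i x ^+ m *: B`_i.

Lemma semifrobD : {morph semifrob : x y / x + y}.
Proof.
have pcharK : p \in [pchar subvs_of K] by rewrite -(pchar_lalg LF).
have frobD (a b : subvs_of K) : (a + b) ^+ m = a ^+ m + b ^+ m.
  by apply: exprDn_pchar; rewrite pnatX pnatE ?pcharK ?(pcharf_prime pcharK).
move=> x y; rewrite /semifrob -big_split; apply: eq_bigr => i _ /=.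
by rewrite linearD frobD scalerDl.
Qed.

Lemma semifrobZ (c : subvs_of K) x : semifrob (c *: x) = c ^+ m *: semifrob x.
Proof.
rewrite /semifrob scaler_sumr; apply: eq_bigr => i _.
by rewrite linearZ exprMn scalerA.
Qed.

Lemma semifrob_basis (j : 'I_r) : semifrob B`_j = B`_j.
Proof.
have freeB : free B := basis_free (vbasisP _).
rewrite /semifrob (bigD1 j) //= big1 ?addr0 => [|i ij].
  by rewrite coord_free // eqxx expr1n scale1r.
by rewrite coord_free // eq_sym (negPf ij) expr0n gtn_eqF ?scale0r.
Qed.

Lemma semifrob_inj : injective semifrob.
Proof.
have ker0 x : semifrob x = 0 -> x = 0.
  move=> x0; rewrite (coord_vbasis (memvf x)); apply: big1 => i _.
  have := coord_sum_free (fun i => coord B i x ^+ m) i (basis_free (vbasisP _)).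
  rewrite [\sum_(i < _) _]x0 linear0 => /esym/eqP.
  by rewrite expf_eq0 => /andP[_ /eqP ->]; rewrite scale0r.
move=> x y e; apply/eqP; rewrite -subr_eq0; apply/eqP/ker0.
by apply: (addIr (semifrob y)); rewrite -semifrobD subrK e add0r.
Qed.

Definition psi (x : F) : F := - semifrob x.

Lemma psiD : {morph psi : x y / x + y}.
Proof. by move=> x y; rewrite /psi semifrobD opprD. Qed.

Lemma psi_mul (c x : F) : (c : L) \in K -> psi (c * x) = c ^+ m * psi x.
Proof.
move=> cK; rewrite /psi mulrN; congr (- _).
have -> : (c * x : F) = Subvs cK *: (x : LF) by rewrite fieldOver_scaleE.
by rewrite semifrobZ fieldOver_scaleE rmorphXn.
Qed.

Lemma psi0 : psi 0 = 0.
Proof. by apply: (addIr (psi 0)); rewrite -psiD !add0r. Qed.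

Lemma psi_basis (j : 'I_r) : psi B`_j = - B`_j.
Proof. by rewrite /psi semifrob_basis. Qed.

Lemma psi_inj : injective psi.
Proof. by move=> x y /oppr_inj /semifrob_inj. Qed.

Definition psi_perm : {perm F} := perm psi_inj.

Lemma conj_psi_perm a b : a ^+ d = 1 -> (aff a b ^ psi_perm)%g = aff a^-1 (psi b).
Proof.
move=> ad; have a0 := unity_root_neq0 d_gt0 ad.
apply/permP => x; rewrite conjgE !permM !affE ?invr_eq0 // {1}/psi_perm permE.
rewrite psiD psi_mul ?unity_root_field_mem // unity_root_expm //.
by have := permKV psi_perm x; rewrite {1}/psi_perm permE => ->.
Qed.

Lemma psi_perm_norm : psi_perm \in 'N(Gqd F d)%g.
Proof.
rewrite inE; apply/subsetP => s; rewrite mem_conjg => Gs.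
rewrite -(conjgKV psi_perm s); have /Gqd_coefs[sd ->] := Gs.
by rewrite conj_psi_perm // aff_Gqd // exprVn sd invr1.
Qed.

Section Generation.
Variable H : {group {perm F}}.
Hypothesis dil_H : forall a : F, a ^+ d = 1 -> aff a 0 \in H.

Lemma transl_sum_closed (I : finType) (f : I -> F) :
  (forall i, transl (f i) \in H) -> transl (\sum_i f i) \in H.
Proof.
move=> Hf; elim/big_ind: _ => //; first by rewrite /transl aff10 group1.
by move=> b c Hb Hc; rewrite translD groupM.
Qed.

Lemma transl_mul_closed (c b : F) :
  (c : L) \in K -> transl b \in H -> transl (c * b) \in H.
Proof.
move=> cK Hb; have cE := coord_span (X := in_tuple unity_roots) cK.
have -> : c * b = \sum_(i < size unity_roots)
    (unity_roots`_i * b) *+ coord (in_tuple unity_roots) i c.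
  by rewrite {1}cE mulr_suml; apply: eq_bigr => i _; rewrite -mulr_natl mulrA.
apply: transl_sum_closed => i; rewrite -translMn groupX //.
have : unity_roots`_i \in unity_roots by rewrite mem_nth.
rewrite mem_unity_roots => /eqP ud; have u0 := unity_root_neq0 d_gt0 ud.
by rewrite -(conj_transl _ 0 u0) !groupM ?groupV ?dil_H.
Qed.

Lemma Gqd_sub_dil_transl_basis : (forall j : 'I_r, @transl F B`_j \in H) -> Gqd F d \subset H.
Proof.
move=> HB; apply/subsetP => s /Gqd_coefs[sd ->].
have -> : aff (slope s) (offset s) = (aff (slope s) 0 * transl (offset s))%g.
  by rewrite affM ?slope_neq0 ?oner_neq0 // mulr1 mulr0 add0r.
rewrite groupM ?dil_H // (coord_vbasis (memvf (offset s : LF))).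
apply: transl_sum_closed => j; rewrite fieldOver_scaleE.
exact: transl_mul_closed (subvsP _) (HB j).
Qed.

End Generation.

Lemma Gqd_has_GI : has_GI_automorphism (Gqd F d).
Proof.
pose sg := conj_aut (Gqd_group F d) psi_perm.
have sgE : {in Gqd F d, forall s, sg s = (s ^ psi_perm)%g}.
  by move=> s; apply: norm_conj_autE psi_perm_norm.
exists sg; split; first exact: Aut_aut.
pose I := [set g in Gqd F d | sg g == (g^-1)%g].
have I_gen s : s \in Gqd F d -> (s ^ psi_perm)%g = (s^-1)%g -> s \in <<I>>%g.
  by move=> Gs sV; apply/mem_gen/setIdP; rewrite sgE // sV.
apply/eqP; rewrite eqEsubset gen_subG; apply/andP; split.
  by apply/subsetP => g /setIdP[].
apply: Gqd_sub_dil_transl_basis => [a ad | j].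
  rewrite I_gen ?aff_Gqd // conj_psi_perm // psi0.
  by rewrite affV ?(unity_root_neq0 d_gt0) // mulr0 oppr0.
rewrite I_gen ?transl_Gqd // conj_psi_perm ?expr1n // psi_basis.
by rewrite /transl affV ?oner_neq0 // invr1 mul1r.
Qed.

End GIBackward.

Lemma coprime_dvd_expn_sub1 p n d : prime p -> 0 < n -> d %| p ^ n - 1 -> coprime p d.
Proof.
move=> p_pr n_gt0 dvd_d; apply: (coprime_dvdr dvd_d); rewrite prime_coprime //.
apply/negP => dvd_p; have : p %| p ^ n - (p ^ n - 1) by rewrite dvdn_sub // dvdn_exp.
by rewrite subKn ?expn_gt0 ?prime_gt0 // dvdn1 => /eqP p1; rewrite p1 in p_pr.
Qed.

Theorem theorem3p6 (F : finFieldType) (p n d : nat)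
    (hp : prime p) (hn : 0 < n) (hq : #|F| = p ^ n)
    (hd : 0 < d) (hdq : d %| p ^ n - 1) :
  has_GI_automorphism (Gqd F d) <-> exists l : nat, p ^ l + 1 = 0 %[mod d].
Proof.
have pcharFp := card_finPcharP hq hp.
split=> [GI | [l l_mod]].
  have dvd_d : d %| #|F|.-1 by rewrite hq -subn1.
  have [l dvd_l] := GI_Gqd_dvd_expS1 pcharFp hd (coprime_dvd_expn_sub1 hp hn hdq) dvd_d GI.
  by exists l; apply/eqP; rewrite mod0n.
by apply: (Gqd_has_GI pcharFp hd (l := l)); rewrite /dvdn l_mod mod0n.
Qed.
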